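(* Let $f_1,\dots,f_m:\mathbb R^n\to\mathbb R$ be continuously differentiable, $\mu\ge0$, $\gamma_0>0$, $x_0,z_0\in\mathbb R^n$, and let $(\tau_k)_{k\ge0}$ be positive step sizes. Suppose sequences $(\gamma_k),(x_k),(z_k),(y_k)$ satisfy, for all $k\ge0$, the IMEX scheme $$\frac{\gamma_{k+1}-\gamma_k}{\tau_k}=\mu-\gamma_{k+1},\quad \frac{x_{k+1}-x_k}{\tau_k}=z_{k+1}-x_{k+1},\quad \gamma_k\frac{z_{k+1}-z_k}{\tau_k}=\mu(y_k-z_{k+1})-\mathrm{proj}_{C(y_k)}(w_{k+1}),$$ where $y_k=(x_k+\tau_kz_k)/(1+\tau_k)$ and $w_{k+1}=-\mu(z_{k+1}-y_k)+\gamma_k\frac{x_{k+1}-x_k}{\tau_k}-\gamma_k\frac{z_{k+1}-z_k}{\tau_k}$. Then for all $k\ge0$, $$\big\langle\mathrm{proj}_{C(y_k)}(w_{k+1}),x_{k+1}-x_k\big\rangle=\max_{1\le j\le m}\langle\nabla f_j(y_k),x_{k+1}-x_k\rangle.$$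
   Context: $C(y)=\mathrm{conv}\{\nabla f_1(y),\dots,\nabla f_m(y)\}$ and $\mathrm{proj}_C$ is the Euclidean projection onto the closed convex set $C$. *)

From HB Require Import structures.
From mathcomp Require Import all_boot all_order all_algebra.
From mathcomp Require Import all_classical all_reals all_analysis.
Set Implicit Arguments. Unset Strict Implicit. Unset Printing Implicit Defensive.
Import Order.TTheory GRing.Theory Num.Theory.
Import numFieldNormedType.Exports.
Local Open Scope classical_set_scope.
Local Open Scope ring_scope.

Definition dotv {R : realType} {n : nat} (u v : 'rV[R]_n) : R :=
  \sum_(i < n) u 0 i * v 0 i.

Definition grad {R : realType} {n : nat} (f : 'rV[R]_n -> R) (x : 'rV[R]_n)
  : 'rV[R]_n := \row_(i < n) ('D_(delta_mx 0 i) f x : R).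

Definition C1 {R : realType} {n : nat} (f : 'rV[R]_n -> R) : Prop :=
  (forall x, differentiable f x) /\ continuous (grad f).

Definition convhull {R : realType} {n m : nat} (g : 'I_m -> 'rV[R]_n)
  : set 'rV[R]_n :=
  [set v | exists lam : 'I_m -> R, (forall j, 0 <= lam j) /\
      \sum_(j < m) lam j = 1 /\ v = \sum_(j < m) lam j *: g j].

Definition is_proj {R : realType} {n : nat} (C : set 'rV[R]_n) (w p : 'rV[R]_n)
  : Prop :=
  C p /\ forall q, C q -> dotv (w - p) (w - p) <= dotv (w - q) (w - q).

(* the Euclidean projection onto C (well defined and unique when C is a
   nonempty closed convex set) *)
Definition projC {R : realType} {n : nat} (C : set 'rV[R]_n) (w : 'rV[R]_n)
  : 'rV[R]_n := xget 0 (is_proj C w).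

Definition Cset {R : realType} {n m : nat} (f : 'I_m -> 'rV[R]_n -> R)
  (y : 'rV[R]_n) : set 'rV[R]_n := convhull (fun j => grad (f j) y).

(* The projection [p] of [w] onto the convex hull [C] of the gradients is characterised by the
   obtuse-angle inequality [<w - p, q - p> <= 0] for [q] in [C]. The scheme makes [w - p] a
   positive multiple [gamma_k / tau_k] of the step [x_{k+1} - x_k], so testing the inequality at
   the vertices gives [<grad f_j (y_k), x_{k+1} - x_k> <= <p, x_{k+1} - x_k>] for every [j]; the
   converse inequality holds because [p] is a convex combination of the gradients. *)
From HB Require Import structures.
From mathcomp Require Import all_boot all_order all_algebra.
From mathcomp Require Import all_classical all_reals all_analysis.
From mathcomp Require Import ring lra.
Set Implicit Arguments. Unset Strict Implicit. Unset Printing Implicit Defensive.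
Import Order.TTheory GRing.Theory Num.Theory.
Import numFieldNormedType.Exports.
Local Open Scope classical_set_scope.
Local Open Scope ring_scope.

Lemma continuous_sum {R : numFieldType} {V : normedModType R} {T : topologicalType}
    (I : Type) (r : seq I) (F : I -> T -> V) :
  (forall i, continuous (F i)) -> continuous (fun x => \sum_(i <- r) F i x).
Proof.
move=> cF.
have -> : (fun x => \sum_(i <- r) F i x) = \sum_(i <- r) F i.
  by apply/funext => x; rewrite fct_sumE.
apply: (big_ind (fun h : T -> V => continuous h)) => //.
- exact: cst_continuous.
- by move=> f g cf cg x; exact: continuousD (cf x) (cg x).
Qed.

Section InnerProduct.
Variables (R : realType) (n : nat).
Implicit Types u v a : 'rV[R]_n.

Lemma dotvC u v : dotv u v = dotv v u.
Proof. by apply: eq_bigr => i _; rewrite mulrC. Qed.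

Lemma dotvDl u v a : dotv (u + v) a = dotv u a + dotv v a.
Proof. by rewrite /dotv -big_split; apply: eq_bigr => i _; rewrite mxE mulrDl. Qed.

Lemma dotvZl (c : R) u a : dotv (c *: u) a = c * dotv u a.
Proof. by rewrite /dotv mulr_sumr; apply: eq_bigr => i _; rewrite mxE mulrA. Qed.

Lemma dotvNl u a : dotv (- u) a = - dotv u a.
Proof. by rewrite -scaleN1r dotvZl mulN1r. Qed.

Lemma dotvBl u v a : dotv (u - v) a = dotv u a - dotv v a.
Proof. by rewrite dotvDl dotvNl. Qed.

Lemma dotvZr (c : R) u a : dotv a (c *: u) = c * dotv a u.
Proof. by rewrite dotvC dotvZl dotvC. Qed.

Lemma dotvBr u v a : dotv a (u - v) = dotv a u - dotv a v.
Proof. by rewrite dotvC dotvBl !(dotvC a). Qed.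

Lemma dotv_suml (I : Type) (r : seq I) (F : I -> 'rV[R]_n) a :
  dotv (\sum_(i <- r) F i) a = \sum_(i <- r) dotv (F i) a.
Proof.
elim: r => [|h r IH]; last by rewrite !big_cons dotvDl IH.
by rewrite !big_nil /dotv big1 // => i _; rewrite mxE mul0r.
Qed.

Lemma dotvv_ge0 u : 0 <= dotv u u.
Proof. by apply: sumr_ge0 => i _; rewrite -expr2 sqr_ge0. Qed.

Lemma continuous_dotv (T : topologicalType) (F G : T -> 'rV[R]_n) :
  continuous F -> continuous G -> continuous (fun x => dotv (F x) (G x)).
Proof.
move=> cF cG; apply: continuous_sum => i x.
have coord (H : T -> 'rV[R]_n) : continuous H -> continuous (fun y => H y ord0 i).
  move=> cH y.
  exact: continuous_comp (cH y) (@coord_continuous R 1 n ord0 i (H y)).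
exact: continuousM (coord _ cF x) (coord _ cG x).
Qed.

End InnerProduct.

Lemma le0_of_forall_small_pos {R : realFieldType} (a b : R) : 0 <= b ->
  (forall t, 0 < t -> t <= 1 -> 2 * a <= t * b) -> a <= 0.
Proof.
move=> b0 small; rewrite leNgt; apply/negP => a0.
have ab0 : 0 < a + b by lra.
have t0 : 0 < a / (a + b) by rewrite divr_gt0.
have t1 : a / (a + b) <= 1 by rewrite ler_pdivrMr // mul1r; lra.
have tE : a / (a + b) * (a + b) = a by rewrite mulfVK // gt_eqF.
have := small _ t0 t1; nra.
Qed.

Section ConvexHull.
Variables (R : realType) (n m : nat) (g : 'I_m -> 'rV[R]_n).

Lemma convhull_vertex j : convhull g (g j).
Proof.
exists (fun i => (i == j)%:R); split; first by move=> i; case: (i == j).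
by split; rewrite (bigD1 j) //= eqxx ?scale1r big1 ?addr0 // => i /negPf ->;
  rewrite ?scale0r.
Qed.

Lemma convhull_segment a b t : convhull g a -> convhull g b -> 0 <= t -> t <= 1 ->
  convhull g (a + t *: (b - a)).
Proof.
move=> [la [la0 [la1 ->]]] [lb [lb0 [lb1 ->]]] t0 t1.
exists (fun j => (1 - t) * la j + t * lb j); split.
  by move=> j; rewrite addr_ge0 // mulr_ge0 // subr_ge0.
split; first by rewrite big_split /= -!mulr_sumr la1 lb1; ring.
under [RHS]eq_bigr do rewrite scalerDl -!scalerA.
by rewrite big_split /= -!scaler_sumr scalerBr scalerBl scale1r addrCA addrC.
Qed.

Lemma dotv_convhull_le_bigmax (a0 e : 'rV[R]_n) v : convhull g v ->
  dotv v e <= \big[Num.max/dotv a0 e]_(j < m) dotv (g j) e.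
Proof.
move=> [lam [lam0 [lam1 ->]]]; rewrite dotv_suml.
apply: (@le_trans _ _ (\sum_j lam j * \big[Num.max/dotv a0 e]_(j < m) dotv (g j) e)).
  apply: ler_sum => j _; rewrite dotvZl ler_wpM2l //.
  exact: (le_bigmax _ (fun j => dotv (g j) e) j).
by rewrite -mulr_suml lam1 mul1r.
Qed.

End ConvexHull.

Lemma compact_simplex (R : realType) (k : nat) :
  compact [set v : 'rV[R]_k | (forall i, 0 <= v ord0 i <= 1) /\ \sum_i v ord0 i = 1].
Proof.
have -> : [set v : 'rV[R]_k | (forall i, 0 <= v ord0 i <= 1) /\ \sum_i v ord0 i = 1] =
    [set v : 'rV[R]_k | forall i, `[0, 1]%classic (v ord0 i)] `&`
    (fun v : 'rV[R]_k => \sum_i v ord0 i) @^-1` [set 1].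
  by apply/seteqP; split => v /= [v01 ->]; split => // i; have := v01 i; rewrite in_itv.
apply: compact_closedI.
  by apply: (@rV_compact _ _ (fun=> `[0 : R, 1]%classic)) => i; exact: segment_compact.
apply: preimage_closed; last exact: closed_eq.
by move=> v _; apply: continuous_sum => i; exact: coord_continuous.
Qed.

Section Projection.
Variables (R : realType) (n : nat).

Lemma is_proj_obtuse (C : set 'rV[R]_n) w p q : is_proj C w p ->
    (forall t, 0 < t -> t <= 1 -> C (p + t *: (q - p))) ->
  dotv (w - p) (q - p) <= 0.
Proof.
(* minimality against [p + t (q - p)] reads [2 t <w - p, q - p> <= t^2 |q - p|^2] *)
move=> [_ pmin] segC; apply: (le0_of_forall_small_pos (dotvv_ge0 (q - p))) => t t0 t1.
have := pmin _ (segC t t0 t1).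
rewrite opprD addrA; move: (w - p) (q - p) => u v.
rewrite !(dotvBl, dotvBr, dotvZl, dotvZr) (dotvC v u) => le_proj.
have : 0 <= t * (t * dotv v v - 2 * dotv u v) by nra.
by rewrite pmulr_rge0 //; lra.
Qed.

Lemma is_proj_convhull_exists (m : nat) (g : 'I_m.+1 -> 'rV[R]_n) w :
  exists p, is_proj (convhull g) w p.
Proof.
pose comb (v : 'rV[R]_m.+1) := \sum_j v ord0 j *: g j.
have ccomb : continuous comb.
  apply: continuous_sum => j v.
  exact: continuousZr_tmp (@coord_continuous R 1 m.+1 ord0 j v).
pose dist2 v := dotv (w - comb v) (w - comb v).
have cdist2 : continuous dist2.
  have cdiff : continuous (fun v => w - comb v).
    by move=> v; apply: continuousB; [exact: (@cst_continuous _ _ w v) | exact: ccomb].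
  by apply: continuous_dotv; exact: cdiff.
have simplex_ne0 : [set v : 'rV[R]_m.+1 |
    (forall i, 0 <= v ord0 i <= 1) /\ \sum_i v ord0 i = 1] !=set0.
  exists (\row_j (j == ord0)%:R); split => [i|].
    by rewrite mxE; case: (i == ord0) => /=; lra.
  by rewrite (bigD1 ord0) //= mxE eqxx big1 ?addr0 // => i /negPf ni; rewrite mxE ni.
have [c] := compact_EVT_min simplex_ne0 (@compact_simplex R m.+1)
  (continuous_subspaceT cdist2).
rewrite inE => -[c01 c1] cmin.
exists (comb c); split.
  by exists (fun j => c ord0 j); split => // j; case/andP: (c01 j).
move=> _ [lam [lam0 [lam1 ->]]].
have -> : \sum_j lam j *: g j = comb (\row_j lam j).
  by apply: eq_bigr => j _; rewrite mxE.
apply: cmin; rewrite inE; split; last by rewrite -lam1; apply: eq_bigr => j _; rewrite mxE.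
move=> i; rewrite mxE lam0 -lam1 (bigD1 i) //= lerDl.
exact: sumr_ge0.
Qed.

End Projection.

Lemma projC_convhull_dotv_eq_bigmax (R : realType) (n m : nat)
    (g : 'I_m.+1 -> 'rV[R]_n) w e (c : R) :
  0 < c -> w - projC (convhull g) w = c *: e ->
  dotv (projC (convhull g) w) e = \big[Num.max/dotv (g ord0) e]_(j < m.+1) dotv (g j) e.
Proof.
set p := projC _ w => c0 wpE.
(* [projC] is an [xget] with junk default [0]: it is a projection only once one exists. *)
have proj_p : is_proj (convhull g) w p := xgetPex 0 (is_proj_convhull_exists g w).
have [pC _] := proj_p.
have vertex_le j : dotv (g j) e <= dotv p e.
  have := is_proj_obtuse proj_p (fun t t0 t1 => convhull_segment pC (convhull_vertex g j)
    (ltW t0) t1).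
  by rewrite wpE dotvZl dotvBr pmulr_rle0 // subr_le0 !(dotvC e).
apply/eqP; rewrite eq_le dotv_convhull_le_bigmax //=.
by apply: bigmax_le => [|j _]; exact: vertex_le.
Qed.

Lemma implicit_relaxation_gt0 (R : realFieldType) (mu : R) (tau gamma : nat -> R) :
  0 <= mu -> 0 < gamma 0%N -> (forall k, 0 < tau k) ->
  (forall k, (gamma k.+1 - gamma k) / tau k = mu - gamma k.+1) ->
  forall k, 0 < gamma k.
Proof.
move=> mu0 gamma0 tau0 scheme; elim=> // k IH.
have tk := tau0 k.
have : gamma k.+1 - gamma k = tau k * (mu - gamma k.+1).
  by rewrite -scheme mulrC divfK // gt_eqF.
nra.
Qed.

Theorem mainTheorem9 (R : realType) (n m : nat)
  (f : 'I_m.+1 -> 'rV[R]_n -> R) (mu gamma0 : R) (x0 z0 : 'rV[R]_n)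
  (tau gamma : nat -> R) (x z : nat -> 'rV[R]_n) :
  (forall j, C1 (f j)) ->
  0 <= mu -> 0 < gamma0 ->
  (forall k, 0 < tau k) ->
  gamma 0%N = gamma0 -> x 0%N = x0 -> z 0%N = z0 ->
  let y k := (1 + tau k)^-1 *: (x k + tau k *: z k) in
  (* w k denotes w_{k+1} *)
  let w k := - (mu *: (z k.+1 - y k)) + gamma k *: ((tau k)^-1 *: (x k.+1 - x k))
    - gamma k *: ((tau k)^-1 *: (z k.+1 - z k)) in
  (forall k, (gamma k.+1 - gamma k) / tau k = mu - gamma k.+1) ->
  (forall k, (tau k)^-1 *: (x k.+1 - x k) = z k.+1 - x k.+1) ->
  (forall k, gamma k *: ((tau k)^-1 *: (z k.+1 - z k))
             = mu *: (y k - z k.+1) - projC (Cset f (y k)) (w k)) ->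
  forall k,
    dotv (projC (Cset f (y k)) (w k)) (x k.+1 - x k)
    = \big[Num.max/dotv (grad (f ord0) (y k)) (x k.+1 - x k)]_(j < m.+1)
        dotv (grad (f j) (y k)) (x k.+1 - x k).
Proof.
move=> _ mu0 gamma0_gt0 tau_gt0 gamma_init _ _ y w gamma_step _ z_step k.
have gamma_gt0 : forall k, 0 < gamma k.
  by apply: (implicit_relaxation_gt0 mu0 _ tau_gt0 gamma_step); rewrite gamma_init.
apply: (projC_convhull_dotv_eq_bigmax (c := gamma k / tau k)).
  by rewrite divr_gt0 ?gamma_gt0.
set p := projC _ (w k).
rewrite {1}/w z_step -/p -(opprB (z k.+1)) scalerN scalerA.
by rewrite opprD !opprK addrA addrK addrAC addNr add0r.
Qed.
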